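(* Let $E$ be a Banach $f$-algebra with order continuous norm and with a multiplicative unit $e$, and let $(x_n)$ be a decreasing sequence in $E$. Then $x_n\xrightarrow{mw}0$ if and only if $|x_n|(u\wedge e)\to0$ weakly for every $u\in E_+$.
   Context: All vector lattices are real and Archimedean. An $f$-algebra is a vector lattice with an associative multiplication making it an algebra, such that products of positive elements are positive and $x\wedge y=0$ implies $(xz)\wedge y=(zx)\wedge y=0$ for all $z\ge0$. A Banach $f$-algebra is an $f$-algebra which is a Banach lattice with $\|xy\|\le\|x\|\|y\|$. A net $(x_\alpha)$ in $E$ $mw$-converges to $x$ ($x_\alpha\xrightarrow{mw}x$) if $|x_\alpha-x|u\to0$ weakly for every $u\in E_+$. *)

From HB Require Import structures.
From mathcomp Require Import all_boot all_order all_algebra.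
From mathcomp Require Import all_classical all_reals all_analysis.
Set Implicit Arguments. Unset Strict Implicit. Unset Printing Implicit Defensive.
Import Order.TTheory GRing.Theory Num.Theory.
Import numFieldNormedType.Exports.
Local Open Scope ring_scope.
Local Open Scope classical_set_scope.

Section BFA.
Variables (R : realType) (E : completeNormedModType R).

Record banach_f_algebra := BanachFAlgebra {
  bfa_le : E -> E -> Prop;
  bfa_join : E -> E -> E;
  bfa_meet : E -> E -> E;
  bfa_mul : E -> E -> E;
  le_refl : forall x, bfa_le x x;
  le_anti : forall x y, bfa_le x y -> bfa_le y x -> x = y;
  le_trans : forall x y z, bfa_le x y -> bfa_le y z -> bfa_le x z;
  le_add : forall x y z, bfa_le x y -> bfa_le (x + z) (y + z);
  le_scale : forall (a : R) x y, 0 <= a -> bfa_le x y -> bfa_le (a *: x) (a *: y);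
  join_ub_l : forall x y, bfa_le x (bfa_join x y);
  join_ub_r : forall x y, bfa_le y (bfa_join x y);
  join_least : forall x y z, bfa_le x z -> bfa_le y z -> bfa_le (bfa_join x y) z;
  meet_lb_l : forall x y, bfa_le (bfa_meet x y) x;
  meet_lb_r : forall x y, bfa_le (bfa_meet x y) y;
  meet_greatest : forall x y z, bfa_le z x -> bfa_le z y -> bfa_le z (bfa_meet x y);
  archimedean : forall x y, bfa_le 0 x -> (forall n : nat, bfa_le (n%:R *: x) y) -> x = 0;
  norm_lattice : forall x y, bfa_le (bfa_join x (- x)) (bfa_join y (- y)) -> `|x| <= `|y|;
  mulA : forall x y z, bfa_mul x (bfa_mul y z) = bfa_mul (bfa_mul x y) z;
  mulDl : forall x y z, bfa_mul (x + y) z = bfa_mul x z + bfa_mul y z;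
  mulDr : forall x y z, bfa_mul x (y + z) = bfa_mul x y + bfa_mul x z;
  mulZl : forall (a : R) x y, bfa_mul (a *: x) y = a *: bfa_mul x y;
  mulZr : forall (a : R) x y, bfa_mul x (a *: y) = a *: bfa_mul x y;
  mul_ge0 : forall x y, bfa_le 0 x -> bfa_le 0 y -> bfa_le 0 (bfa_mul x y);
  f_disj : forall x y z, bfa_meet x y = 0 -> bfa_le 0 z ->
     bfa_meet (bfa_mul x z) y = 0 /\ bfa_meet (bfa_mul z x) y = 0;
  norm_mul : forall x y, `|bfa_mul x y| <= `|x| * `|y|
}.

Variable B : banach_f_algebra.

Definition babs (x : E) : E := bfa_join B x (- x).

Definition bpos (x : E) : Prop := bfa_le B 0 x.

Definition is_mul_unit (e : E) : Prop :=
  forall x, bfa_mul B e x = x /\ bfa_mul B x e = x.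

Definition order_continuous_norm : Prop :=
  forall (I : Type) (r : I -> I -> Prop) (x : I -> E),
    inhabited I ->
    (forall i, r i i) ->
    (forall i j k, r i j -> r j k -> r i k) ->
    (forall i j, exists k, r i k /\ r j k) ->
    (forall i j, r i j -> bfa_le B (x j) (x i)) ->
    (forall i, bfa_le B 0 (x i)) ->
    (forall z, (forall i, bfa_le B z (x i)) -> bfa_le B z 0) ->
    forall eps : R, 0 < eps -> exists i0, forall i, r i0 i -> `|x i| < eps.

Definition cont_functional (f : E -> R) : Prop :=
  (forall x y, f (x + y) = f x + f y) /\
  (forall (a : R) x, f (a *: x) = a * f x) /\
  continuous f.

Definition weak_cvg0 (y : nat -> E) : Prop :=
  forall f, cont_functional f -> (fun n => f (y n)) @ \oo --> (0 : R).

Definition mw_cvg0 (x : nat -> E) : Prop :=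
  forall u, bpos u -> weak_cvg0 (fun n => bfa_mul B (babs (x n - 0)) u).

End BFA.

From Pilot Require Import Defs.
From mathcomp Require Import all_boot all_order all_algebra.
From mathcomp Require Import all_classical all_reals all_analysis.
Set Implicit Arguments. Unset Strict Implicit. Unset Printing Implicit Defensive.
Import Order.TTheory GRing.Theory Num.Theory.
Import numFieldNormedType.Exports.
Local Open Scope ring_scope.

(* Right multiplication by a fixed element is a bounded linear operator, so
   it preserves weak convergence to 0; and every v is the difference of the
   positive elements v + (-v) ∨ 0 and (-v) ∨ 0, so mw-convergence of (x_n)
   amounts to weak convergence of |x_n| v for every v.  With the unit e, both
   conditions of the theorem are therefore equivalent to |x_n| = |x_n| e -> 0
   weakly (for the second one take u := e ∨ 0, for which u ∧ e = e). *)

Section WeakConvergenceProducts.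
Variables (R : realType) (E : completeNormedModType R) (B : banach_f_algebra E).

Local Notation mul := (bfa_mul B).

Lemma bfa_mulNl y u : mul (- y) u = - mul y u.
Proof. by rewrite -scaleN1r mulZl scaleN1r. Qed.

Lemma bfa_mulBl y z u : mul (y - z) u = mul y u - mul z u.
Proof. by rewrite mulDl bfa_mulNl. Qed.

Lemma bfa_mulBr y v w : mul y (v - w) = mul y v - mul y w.
Proof. by rewrite -scaleN1r mulDr mulZr scaleN1r. Qed.

Lemma continuous_bfa_mulr u : continuous (fun y => mul y u).
Proof.
move=> y; apply/cvgrPdist_lt => eps eps_gt0.
have d_gt0 : 0 < eps / (`|u| + 1) by rewrite divr_gt0 // ltr_pwDr.
have /cvgrPdist_lt/(_ _ d_gt0) := @cvg_id _ (nbhs y).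
apply: filterS => z yz_small.
rewrite -bfa_mulBl; apply: le_lt_trans (norm_mul _ _ _) _.
apply: (@le_lt_trans _ _ (`|y - z| * (`|u| + 1))).
  by rewrite ler_wpM2l // lerDl.
by rewrite -ltr_pdivlMr ?ltr_pwDr.
Qed.

Lemma cont_functional_comp_mulr f u :
  cont_functional f -> cont_functional (fun y => f (mul y u)).
Proof.
case=> fD [fZ f_cont]; split; [|split].
- by move=> y z; rewrite mulDl fD.
- by move=> a y; rewrite mulZl fZ.
- by move=> y; apply: continuous_comp; [exact: continuous_bfa_mulr | exact: f_cont].
Qed.

Lemma weak_cvg0_mulr (y : nat -> E) u :
  weak_cvg0 y -> weak_cvg0 (fun n => mul (y n) u).
Proof. by move=> y_cvg f /(cont_functional_comp_mulr u)/y_cvg. Qed.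

Lemma weak_cvg0B (y z : nat -> E) :
  weak_cvg0 y -> weak_cvg0 z -> weak_cvg0 (fun n => y n - z n).
Proof.
move=> y_cvg z_cvg f f_cf; case: (f_cf) => fD [fZ _].
have fN w : f (- w) = - f w by rewrite -scaleN1r fZ mulN1r.
under eq_fun do rewrite fD fN.
by rewrite -(subrr 0); apply: cvgB; [exact: y_cvg | exact: z_cvg].
Qed.

Lemma bpos_add_join_opp0 v : bpos B (v + bfa_join B (- v) 0).
Proof.
have := le_add v (join_ub_l B (- v) 0).
by rewrite addNr addrC.
Qed.

Lemma weak_cvg0_mulr_bpos (y : nat -> E) :
  (forall u, bpos B u -> weak_cvg0 (fun n => mul (y n) u)) ->
  forall v, weak_cvg0 (fun n => mul (y n) v).
Proof.
move=> y_cvg v; pose c := bfa_join B (- v) 0.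
have c_ge0 : bpos B c by apply: join_ub_r.
rewrite -[v](addrK c); under eq_fun do rewrite bfa_mulBr.
exact: weak_cvg0B (y_cvg _ (bpos_add_join_opp0 v)) (y_cvg _ c_ge0).
Qed.

Variable e : E.
Hypothesis e_unit : is_mul_unit B e.

Lemma mw_cvg0E (x : nat -> E) :
  mw_cvg0 B x <-> weak_cvg0 (fun n => babs B (x n)).
Proof.
rewrite /mw_cvg0; under eq_forall do under eq_fun do rewrite subr0.
split=> [x_mw | abs_cvg u _]; last exact: weak_cvg0_mulr.
have := weak_cvg0_mulr_bpos x_mw e.
by under eq_fun do rewrite (e_unit _).2.
Qed.

Lemma weak_cvg0_mulr_meet_unitE (y : nat -> E) :
  (forall u, bpos B u -> weak_cvg0 (fun n => mul (y n) (bfa_meet B u e))) <->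
  weak_cvg0 y.
Proof.
split=> [y_cvg | y_cvg u _]; last exact: weak_cvg0_mulr.
have meet_e : bfa_meet B (bfa_join B e 0) e = e.
  apply: Defs.le_anti; first exact: meet_lb_r.
  by apply: meet_greatest; [exact: join_ub_l | exact: Defs.le_refl].
have := y_cvg _ (join_ub_r B e 0).
by under eq_fun do rewrite meet_e (e_unit _).2.
Qed.

End WeakConvergenceProducts.

Theorem theorem2p8 (R : realType) (E : completeNormedModType R)
  (B : banach_f_algebra E) (e : E)
  (Hoc : order_continuous_norm B) (He : is_mul_unit B e)
  (x : nat -> E) (Hdec : forall n, bfa_le B (x n.+1) (x n)) :
  mw_cvg0 B x <->
  (forall u, bpos B u -> weak_cvg0 (fun n => bfa_mul B (babs B (x n)) (bfa_meet B u e))).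
Proof.
exact: iff_trans (mw_cvg0E He x) (iff_sym (weak_cvg0_mulr_meet_unitE He _)).
Qed.
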